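(* Let $a$ be a global-in-time solution of $$\partial_t a+\Big(\int_{-\pi}^x a(t,\bar x)\,d\bar x\Big)\partial_x a-a^2+\frac1\pi\int_{-\pi}^{\pi}a^2\,dx=0,\qquad \int_{-\pi}^\pi a(t,x)dx=0,\qquad x\in[-\pi,\pi],$$ such that $a(t,\cdot)$ is even for all $t\ge0$, and assume that $\|a(t,\cdot)-\mu\cos(\cdot)\|_{L^\infty([-\pi,\pi])}\to0$ as $t\to\infty$ for some $\mu>0$. Then for all $\kappa_0>0$ and $\delta\in(0,\frac1\mu)$ there exists $\kappa\in(0,\kappa_0)$ such that if $0<|z_0|\le\kappa$ then the characteristic $z$ starting from $z_0$ satisfies $$|z(t)|\le\kappa_0\qquad\text{for all }0\le t\le t_0:=\Big(\frac1\mu-\delta\Big)\ln\Big(\frac{\kappa_0}{|z_0|}\Big).$$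
   Context: The characteristic starting from $z_0$ is the solution of $\dot z(t)=\int_{-\pi}^{z(t)}a(t,x)\,dx$, $z(0)=z_0$. *)

From Stdlib Require Import Reals.
From Coquelicot Require Import Coquelicot.
Open Scope R_scope.

Definition is_global_solution (a : R -> R -> R) : Prop :=
  (forall t x, 0 <= t -> continuous (fun p : R * R => a (fst p) (snd p)) (t, x)) /\
  (forall t x, 0 < t -> -PI <= x <= PI ->
     exists at_ ax : R,
       is_derive (fun s => a s x) t at_ /\
       is_derive (fun y => a t y) x ax /\
       at_ + RInt (fun y => a t y) (-PI) x * ax - (a t x) ^ 2
           + / PI * RInt (fun y => (a t y) ^ 2) (-PI) PI = 0) /\
  (forall t, 0 <= t -> RInt (fun y => a t y) (-PI) PI = 0).

Definition even_in_x (a : R -> R -> R) : Prop :=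
  forall t x, 0 <= t -> -PI <= x <= PI -> a t (-x) = a t x.

(* || a(t,.) - mu cos ||_{L^oo([-pi,pi])} -> 0 as t -> oo (a(t,.) continuous, so sup norm) *)
Definition converges_to_mu_cos (a : R -> R -> R) (mu : R) : Prop :=
  forall eps, 0 < eps -> exists T, forall t x, T <= t -> -PI <= x <= PI ->
    Rabs (a t x - mu * cos x) <= eps.

Definition is_characteristic (a : R -> R -> R) (z0 : R) (z : R -> R) : Prop :=
  z 0 = z0 /\ forall t, 0 <= t -> is_derive z t (RInt (fun x => a t x) (-PI) (z t)).

(* For
   F(t,y) = int_{-pi}^y a(t,x) dx they give F(t,-pi) = F(t,0) = F(t,pi) = 0, so
   |F(t,y)| <= B min(|y|, pi - |y|) whenever |a(t,.)| <= B on [-pi,pi].  Along a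
   characteristic (z^2)' = 2 z F(t,z).  The bound by pi - |z| makes z^2 - pi^2 a
   Gronwall subsolution that cannot reach 0, so |z| <= pi forever; the bound by |z|
   then gives |z(q)| <= |z(p)| e^{B (q - p)}.  Bounding a by M on a compact time
   interval [0,T] and by some B > mu with B (1/mu - delta) < 1 afterwards yields
   |z(t)| <= |z0| e^{M T + B t}, and for |z0| small the factor e^{M T} fits into the
   slack (1 - B (1/mu - delta)) ln(kappa0/|z0|). *)

From Stdlib Require Import Reals Lra Lia.
From Coquelicot Require Import Coquelicot.
Open Scope R_scope.

Lemma exp_le_exp (x y : R) : x <= y -> exp x <= exp y.
Proof.
  intros [Hlt | ->]; [now left; apply exp_increasing | now right].
Qed.

Lemma gronwall_exp (f df : R -> R) (K p q : R) : p <= q ->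
  (forall t, p <= t <= q -> is_derive f t (df t)) ->
  (forall t, p <= t <= q -> df t + K * f t <= 0) ->
  f q * exp (K * (q - p)) <= f p.
Proof.
  intros Hpq Hf Hineq.
  set (g := fun t => f t * exp (K * (t - p))).
  set (dg := fun t => (df t + K * f t) * exp (K * (t - p))).
  assert (Hg : forall t, p <= t <= q -> is_derive g t (dg t)).
  { intros t Ht.
    assert (Hexp : is_derive (fun t => exp (K * (t - p))) t (K * exp (K * (t - p)))).
    { auto_derive; [exact I | unfold Rminus; ring]. }
    replace (dg t) with (plus (mult (df t) (exp (K * (t - p))))
                              (mult (f t) (K * exp (K * (t - p)))))
      by (unfold dg, plus, mult; simpl; ring).
    apply (is_derive_mult f _ t _ _ (Hf t Ht) Hexp).
    intros; apply Rmult_comm. }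
  destruct (MVT_gen g p q dg) as [c [Hc Hmvt]];
    rewrite ?Rmin_left, ?Rmax_right in * by lra.
  - intros t Ht; apply Hg; lra.
  - intros t Ht; apply continuity_pt_filterlim, (ex_derive_continuous g).
    exists (dg t); apply Hg; lra.
  - unfold g, dg in Hmvt.
    rewrite Rminus_diag, Rmult_0_r, exp_0, Rmult_1_r in Hmvt.
    assert (Hneg : (df c + K * f c) * exp (K * (c - p)) <= 0).
    { apply Rmult_le_0_r; [apply Hineq; lra | left; apply exp_pos]. }
    nra.
Qed.

Lemma continuity_pt_pos_near (f : R -> R) (x : R) :
  continuity_pt f x -> 0 < f x ->
  exists eta, 0 < eta /\ forall y, Rabs (y - x) < eta -> 0 < f y.
Proof.
  intros Hf Hpos.
  destruct (proj1 (continuity_pt_locally f x) Hf (mkposreal _ Hpos)) as [eta Heta].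
  exists eta; split; [apply cond_pos |].
  intros y Hy; specialize (Heta y Hy); simpl in Heta.
  apply Rabs_lt_between in Heta; lra.
Qed.

Lemma continuity_first_zero (f : R -> R) (p q : R) : p <= q ->
  (forall t, p <= t <= q -> continuity_pt f t) -> 0 < f p -> f q <= 0 ->
  exists s, p < s <= q /\ f s = 0 /\ forall r, p <= r < s -> 0 < f r.
Proof.
  intros Hpq Hf Hp Hq.
  set (E := fun s => p <= s <= q /\ forall r, p <= r <= s -> 0 < f r).
  assert (HEp : E p) by (split; [lra | intros r Hr; replace r with p by lra; exact Hp]).
  destruct (completeness E) as [m [Hub Hlub]].
  { exists q; intros s [Hs _]; lra. }
  { exists p; exact HEp. }
  assert (Hm : p <= m <= q) by (split; [apply Hub, HEp | apply Hlub; intros s [Hs _]; lra]).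
  assert (Hbelow : forall r, p <= r < m -> 0 < f r).
  { intros r Hr.
    destruct (Rle_or_lt (f r) 0) as [Hfr | Hfr]; [exfalso | exact Hfr].
    assert (Hr_ub : is_upper_bound E r).
    { intros s [_ Hs]; destruct (Rle_or_lt s r) as [| Hrs]; [lra |].
      specialize (Hs r ltac:(lra)); lra. }
    specialize (Hlub r Hr_ub); lra. }
  destruct (Rtotal_order (f m) 0) as [Hneg | [Hzero | Hpos]].
  - exfalso.
    destruct (continuity_pt_pos_near (fun t => - f t) m) as [eta [Heta Hnear]].
    { apply continuity_pt_opp, Hf, Hm. }
    { lra. }
    assert (Hpm : p < m) by (destruct (Req_dec p m) as [<- |]; lra).
    set (r := Rmax p (m - eta / 2)).
    assert (Hr : p <= r < m) by (split; [apply Rmax_l | apply Rmax_lub_lt; lra]).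
    specialize (Hnear r ltac:(apply Rabs_lt_between; unfold r in *;
                                   assert (Hmax := Rmax_r p (m - eta / 2)); lra)).
    specialize (Hbelow r Hr); simpl in Hnear; lra.
  - exists m; repeat split; try lra; auto.
    destruct (Req_dec p m) as [<- |]; lra.
  - exfalso.
    destruct (continuity_pt_pos_near f m) as [eta [Heta Hnear]]; [apply Hf, Hm | exact Hpos |].
    assert (Hmq : m < q) by (destruct (Req_dec m q) as [-> |]; lra).
    set (s := Rmin q (m + eta / 2)).
    assert (Hs : E s).
    { split; [unfold s; split; [apply Rmin_glb |  apply Rmin_l]; lra |].
      intros r Hr; destruct (Rlt_or_le r m); [apply Hbelow; lra |].
      apply Hnear, Rabs_lt_between; unfold s in Hr;
        assert (Hmin := Rmin_r q (m + eta / 2)); lra. }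
    specialize (Hub s Hs); unfold s in Hub.
    assert (Hmin : m < Rmin q (m + eta / 2)) by (apply Rmin_glb_lt; lra).
    lra.
Qed.

Lemma differential_barrier_neg (w dw : R -> R) (K p q : R) : p <= q ->
  (forall t, p <= t <= q -> is_derive w t (dw t)) ->
  (forall t, p <= t <= q -> w t <= 0 -> dw t + K * w t <= 0) ->
  w p < 0 -> w q < 0.
Proof.
  intros Hpq Hw Hineq Hp.
  destruct (Rlt_or_le (w q) 0) as [| Hq]; [assumption | exfalso].
  destruct (continuity_first_zero (fun t => - w t) p q) as [s [Hs [Hws Hbefore]]];
    [lra | | lra | lra |].
  { intros t Ht; apply continuity_pt_opp, continuity_pt_filterlim.
    apply (ex_derive_continuous w); exists (dw t); apply Hw, Ht. }
  assert (Hgron := gronwall_exp w dw K p s ltac:(lra)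
                     ltac:(intros t Ht; apply Hw; lra)).
  assert (Hws0 : w s = 0) by lra.
  rewrite Hws0, Rmult_0_l in Hgron.
  assert (Hle : 0 <= w p).
  { apply Hgron; intros t Ht; apply Hineq; [lra |].
    destruct (Req_dec t s) as [-> | Hts]; [lra |].
    assert (H := Hbefore t ltac:(lra)); lra. }
  lra.
Qed.

Lemma abs_le_of_unit_steps (g : nat -> R) (n : nat) :
  (forall k, (k < n)%nat -> Rabs (g (S k) - g k) <= 1) ->
  Rabs (g n) <= Rabs (g O) + INR n.
Proof.
  induction n as [| n IH]; intros Hstep; [simpl; lra |].
  rewrite S_INR.
  assert (IHn := IH ltac:(intros k Hk; apply Hstep; lia)).
  assert (Hlast := Hstep n ltac:(lia)).
  assert (Htri := Rabs_triang (g (S n) - g n) (g n)).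
  replace (g (S n) - g n + g n) with (g (S n)) in Htri by ring.
  lra.
Qed.

(* Along the segment from (p, c) to (t, x), cut into N steps shorter than the
   modulus of uniform continuity for 1, f changes by less than N. *)
Lemma continuity_2d_bounded_rectangle (f : R -> R -> R) (p q c d : R) :
  (forall t x, p <= t <= q -> c <= x <= d -> continuity_2d_pt f t x) ->
  exists M, forall t x, p <= t <= q -> c <= x <= d -> Rabs (f t x) <= M.
Proof.
  intros Hf.
  destruct (uniform_continuity_2d f p q c d Hf (mkposreal 1 Rlt_0_1)) as [del Hdel].
  assert (Hdel_pos := cond_pos del).
  set (D := Rabs (q - p) + Rabs (d - c)).
  assert (HD : Rabs (q - p) <= D /\ Rabs (d - c) <= D)
    by (unfold D; split; assert (H := Rabs_pos (q - p)); assert (H' := Rabs_pos (d - c)); lra).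
  destruct (INR_archimed del D) as [N HN]; [exact Hdel_pos |].
  assert (HNpos : 0 < INR N) by (assert (H := Rabs_pos (q - p)); nra).
  assert (Hsmall : forall u, 0 <= u <= D -> 0 <= u / INR N < del).
  { intros u Hu; split; [apply Rdiv_le_0_compat; lra |].
    apply Rmult_lt_reg_r with (INR N); [exact HNpos |].
    unfold Rdiv; rewrite Rmult_assoc, Rinv_l by lra; lra. }
  exists (Rabs (f p c) + INR N).
  intros t x Ht Hx.
  assert (Hdt := Hsmall (t - p) ltac:(assert (H := Rle_abs (q - p)); lra)).
  assert (Hdx := Hsmall (x - c) ltac:(assert (H := Rle_abs (d - c)); lra)).
  set (lam := fun k => INR k / INR N).
  assert (Hlam : forall k, (k <= N)%nat -> 0 <= lam k <= 1).
  { intros k Hk; unfold lam; split.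
    - apply Rdiv_le_0_compat; [apply pos_INR | exact HNpos].
    - apply (proj1 (Rdiv_le_1 _ _ HNpos)), le_INR, Hk. }
  assert (Hstep : forall k, lam (S k) - lam k = / INR N)
    by (intros k; unfold lam; rewrite S_INR; field; lra).
  set (g := fun k => f (p + (t - p) * lam k) (c + (x - c) * lam k)).
  assert (Hends : g N = f t x /\ g O = f p c).
  { unfold g, lam; simpl; split; f_equal; field; lra. }
  destruct Hends as [<- <-].
  apply abs_le_of_unit_steps.
  intros k Hk.
  destruct (Hlam k ltac:(lia)) as [H0k H1k].
  destruct (Hlam (S k) ltac:(lia)) as [H0k' H1k'].
  left; apply Hdel; try nra.
  - replace (p + (t - p) * lam (S k) - (p + (t - p) * lam k)) with ((t - p) / INR N)
      by (unfold Rdiv; rewrite <- (Hstep k); ring).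
    rewrite Rabs_right; lra.
  - replace (c + (x - c) * lam (S k) - (c + (x - c) * lam k)) with ((x - c) / INR N)
      by (unfold Rdiv; rewrite <- (Hstep k); ring).
    rewrite Rabs_right; lra.
Qed.

Lemma abs_RInt_le_const_abs (g : R -> R) (u v B : R) : ex_RInt g u v ->
  (forall x, Rmin u v <= x <= Rmax u v -> Rabs (g x) <= B) ->
  Rabs (RInt g u v) <= B * Rabs (v - u).
Proof.
  intros Hg Hb.
  destruct (Rle_or_lt u v) as [Huv | Hvu].
  - rewrite Rmin_left, Rmax_right in Hb by lra.
    rewrite (Rabs_right (v - u)), Rmult_comm by lra.
    apply abs_RInt_le_const; assumption.
  - rewrite Rmin_right, Rmax_left in Hb by lra.
    rewrite (Rabs_left (v - u)), <- (opp_RInt_swap g v u (ex_RInt_swap _ _ _ Hg))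
      by lra.
    change (Rabs (- RInt g v u) <= B * - (v - u)).
    rewrite Rabs_Ropp; replace (B * - (v - u)) with ((u - v) * B) by ring.
    apply abs_RInt_le_const; [lra | apply ex_RInt_swap, Hg | exact Hb].
Qed.

Section EvenMeanZero.

Variables (g : R -> R) (L : R).
Hypothesis L_ge0 : 0 <= L.
Hypothesis g_cont : forall x, continuous g x.
Hypothesis g_even : forall x, -L <= x <= L -> g (- x) = g x.
Hypothesis g_mean : RInt g (- L) L = 0.

Let g_ex (u v : R) : ex_RInt g u v.
Proof. apply (ex_RInt_continuous (V := R_CompleteNormedModule)); intros; apply g_cont. Qed.

Lemma RInt_even_mean_zero_left : RInt g (- L) 0 = 0.
Proof.
  assert (Hsym : RInt g 0 (- L) = - RInt g 0 L).
  { rewrite <- Ropp_0 at 1.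
    rewrite <- (is_RInt_unique _ _ _ _ (is_RInt_comp_opp g 0 L _ (RInt_correct _ _ _ (g_ex _ _)))).
    rewrite (RInt_ext _ (fun y => opp (g y))).
    - apply (RInt_opp (V := R_CompleteNormedModule)), g_ex.
    - intros x Hx; rewrite Rmin_left, Rmax_right in Hx by lra.
      rewrite g_even by lra; reflexivity. }
  assert (Hswap : RInt g (- L) 0 = - RInt g 0 (- L))
    by (symmetry; apply (opp_RInt_swap g), g_ex).
  assert (Hsplit : RInt g (- L) 0 + RInt g 0 L = 0)
    by (rewrite <- g_mean; apply (RInt_Chasles g); apply g_ex).
  lra.
Qed.

Lemma RInt_even_mean_zero_bound (B : R) :
  (forall x, -L <= x <= L -> Rabs (g x) <= B) ->
  forall y, -L <= y <= L ->
  Rabs (RInt g (- L) y) <= B * Rabs y /\ Rabs (RInt g (- L) y) <= B * (L - Rabs y).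
Proof.
  intros Hb y Hy.
  assert (Hbound : forall u v, -L <= u <= L -> -L <= v <= L ->
                     Rabs (RInt g u v) <= B * Rabs (v - u)).
  { intros u v Hu Hv; apply abs_RInt_le_const_abs; [apply g_ex |].
    intros x Hx; apply Hb; split.
    - apply Rle_trans with (Rmin u v); [apply Rmin_glb; lra | lra].
    - apply Rle_trans with (Rmax u v); [lra | apply Rmax_lub; lra]. }
  assert (Hfrom0 : RInt g (- L) y = RInt g 0 y).
  { rewrite <- (RInt_Chasles g (- L) 0 y (g_ex _ _) (g_ex _ _)), RInt_even_mean_zero_left.
    apply Rplus_0_l. }
  assert (HtoL : RInt g (- L) y = - RInt g y L).
  { rewrite <- (RInt_Chasles g (- L) y L (g_ex _ _) (g_ex _ _)) in g_mean.
    change (RInt g (- L) y + RInt g y L = 0) in g_mean; lra. }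
  split.
  - rewrite Hfrom0; rewrite <- (Rminus_0_r y) at 2; apply Hbound; lra.
  - destruct (Rle_or_lt 0 y) as [Hy0 | Hy0].
    + rewrite HtoL, Rabs_Ropp, (Rabs_right y), <- (Rabs_right (L - y)) by lra.
      apply Hbound; lra.
    + rewrite (Rabs_left y), <- (Rabs_right (L - - y)) by lra.
      replace (L - - y) with (y - - L) by ring.
      apply Hbound; lra.
Qed.

End EvenMeanZero.

Section Characteristic.

Variables (a : R -> R -> R) (z : R -> R).
Hypothesis a_cont : forall t x, 0 <= t -> continuous (a t) x.
Hypothesis a_even : even_in_x a.
Hypothesis a_mean : forall t, 0 <= t -> RInt (a t) (- PI) PI = 0.
Hypothesis z_deriv : forall t, 0 <= t -> is_derive z t (RInt (a t) (- PI) (z t)).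

Let flux_bound (t B : R) : 0 <= t ->
  (forall x, -PI <= x <= PI -> Rabs (a t x) <= B) ->
  forall y, -PI <= y <= PI ->
  Rabs (RInt (a t) (- PI) y) <= B * Rabs y /\
  Rabs (RInt (a t) (- PI) y) <= B * (PI - Rabs y).
Proof.
  intros Ht HB.
  apply RInt_even_mean_zero_bound; try assumption.
  - left; apply PI_RGT_0.
  - intros x; apply a_cont, Ht.
  - intros x Hx; apply a_even; assumption.
  - apply a_mean, Ht.
Qed.

Lemma is_derive_characteristic_sq (c t : R) : 0 <= t ->
  is_derive (fun s => z s ^ 2 - c) t (2 * z t * RInt (a t) (- PI) (z t)).
Proof.
  intros Ht.
  replace (2 * z t * RInt (a t) (- PI) (z t))
    with (INR 2 * RInt (a t) (- PI) (z t) * z t ^ Nat.pred 2 - 0) by (simpl; ring).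
  apply (is_derive_minus (fun s => z s ^ 2) (fun _ => c)).
  - apply is_derive_pow, z_deriv, Ht.
  - apply (is_derive_const (K := R_AbsRing) (V := R_NormedModule)).
Qed.

Lemma characteristic_confined (M : R) :
  (forall t x, 0 <= t -> -PI <= x <= PI -> Rabs (a t x) <= M) ->
  Rabs (z 0) < PI -> forall t, 0 <= t -> Rabs (z t) <= PI.
Proof.
  intros HM Hz0 t Ht.
  assert (HPI := PI_RGT_0).
  assert (Hbarrier : z t ^ 2 - PI ^ 2 < 0).
  { apply (differential_barrier_neg _ _ (2 * M) 0 t Ht
             (fun s Hs => is_derive_characteristic_sq (PI ^ 2) s (proj1 Hs))).
    - intros s Hs Hws.
      rewrite <- pow2_abs in Hws |- *.
      assert (Hzs := Rabs_pos (z s)).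
      assert (Hin : Rabs (z s) <= PI) by nra.
      destruct (flux_bound s M (proj1 Hs) (fun x Hx => HM s x (proj1 Hs) Hx) (z s))
        as [_ HF]; [apply Rabs_le_between; exact Hin |].
      set (F := RInt (a s) (- PI) (z s)) in HF |- *.
      assert (HzF : z s * F <= Rabs (z s) * Rabs F)
        by (rewrite <- Rabs_mult; apply Rle_abs).
      assert (HF0 := Rabs_pos F).
      nra.
    - rewrite <- pow2_abs; assert (H := Rabs_pos (z 0)); nra. }
  rewrite <- pow2_abs in Hbarrier; assert (H := Rabs_pos (z t)); nra.
Qed.

Lemma characteristic_growth (B p q : R) : 0 <= p <= q ->
  (forall t x, p <= t <= q -> -PI <= x <= PI -> Rabs (a t x) <= B) ->
  (forall t, p <= t <= q -> Rabs (z t) <= PI) ->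
  Rabs (z q) <= Rabs (z p) * exp (B * (q - p)).
Proof.
  intros Hpq HB Hconf.
  assert (Hsq : (z q ^ 2 - 0) * exp (- (2 * B) * (q - p)) <= z p ^ 2 - 0).
  { apply (gronwall_exp (fun s => z s ^ 2 - 0)
                        (fun s => 2 * z s * RInt (a s) (- PI) (z s))); [lra | |].
    - intros t Ht; apply is_derive_characteristic_sq; lra.
    - intros t Ht.
      destruct (flux_bound t B ltac:(lra) (fun x Hx => HB t x Ht Hx) (z t))
        as [HF _]; [apply Rabs_le_between, Hconf, Ht |].
      set (F := RInt (a t) (- PI) (z t)) in HF |- *.
      assert (HzF : z t * F <= Rabs (z t) * Rabs F)
        by (rewrite <- Rabs_mult; apply Rle_abs).
      rewrite <- pow2_abs.
      assert (Hzt := Rabs_pos (z t)).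
      nra. }
  set (E := exp (B * (q - p))).
  assert (HE : exp (- (2 * B) * (q - p)) * (E * E) = 1)
    by (unfold E; rewrite <- !exp_plus, <- exp_0; f_equal; ring).
  assert (HE0 : 0 < E) by apply exp_pos.
  apply Rsqr_incr_0_var; [| apply Rmult_le_pos; [apply Rabs_pos | lra]].
  unfold Rsqr.
  assert (Hq : Rabs (z q) * Rabs (z q) = z q ^ 2) by (rewrite <- pow2_abs; ring).
  assert (Hp : Rabs (z p) * Rabs (z p) = z p ^ 2) by (rewrite <- pow2_abs; ring).
  rewrite !Rminus_0_r in Hsq.
  assert (Hexp := exp_pos (- (2 * B) * (q - p))).
  nra.
Qed.

Lemma characteristic_two_phase_growth (M B T : R) : 0 <= T -> 0 <= B ->
  (forall t x, 0 <= t -> -PI <= x <= PI -> Rabs (a t x) <= M) ->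
  (forall t x, T <= t -> -PI <= x <= PI -> Rabs (a t x) <= B) ->
  Rabs (z 0) < PI ->
  forall t, 0 <= t -> Rabs (z t) <= Rabs (z 0) * exp (M * T + B * t).
Proof.
  intros HT HB0 HM HB Hz0 t Ht.
  assert (HM0 : 0 <= M).
  { apply Rle_trans with (Rabs (a 0 0)); [apply Rabs_pos |].
    apply HM; [lra | assert (HPI := PI_RGT_0); lra]. }
  assert (Hconf := characteristic_confined M HM Hz0).
  assert (Hz0pos := Rabs_pos (z 0)).
  destruct (Rle_or_lt t T) as [HtT | HTt].
  - apply Rle_trans with (Rabs (z 0) * exp (M * (t - 0))).
    + apply characteristic_growth; [lra | intros s x Hs; apply HM; lra |].
      intros s Hs; apply Hconf; lra.
    + apply Rmult_le_compat_l, exp_le_exp; nra.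
  - assert (Hphase1 : Rabs (z T) <= Rabs (z 0) * exp (M * (T - 0))).
    { apply characteristic_growth; [lra | intros s x Hs; apply HM; lra |].
      intros s Hs; apply Hconf; lra. }
    assert (Hphase2 : Rabs (z t) <= Rabs (z T) * exp (B * (t - T))).
    { apply characteristic_growth; [lra | intros s x Hs; apply HB; lra |].
      intros s Hs; apply Hconf; lra. }
    rewrite Rminus_0_r in Hphase1.
    apply Rle_trans with (Rabs (z 0) * exp (M * T) * exp (B * (t - T))).
    + apply Rle_trans with (1 := Hphase2), Rmult_le_compat_r; [left; apply exp_pos | exact Hphase1].
    + rewrite Rmult_assoc, <- exp_plus.
      apply Rmult_le_compat_l, exp_le_exp; nra.
Qed.

End Characteristic.

Lemma continuous_section (f : R -> R -> R) (t x : R) :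
  continuous (fun p : R * R => f (fst p) (snd p)) (t, x) -> continuous (f t) x.
Proof.
  intros Hf.
  apply (continuous_comp_2 (fun _ => t) (fun y => y) f);
    [apply continuous_const | apply continuous_id | exact Hf].
Qed.

Lemma rate_above (mu delta : R) : 0 < mu -> 0 < delta < / mu ->
  exists B, mu < B /\ B * (/ mu - delta) < 1.
Proof.
  intros Hmu Hdelta.
  exists (mu + mu * mu * delta / 2); split.
  - assert (0 < mu * mu * delta) by (repeat apply Rmult_lt_0_compat; lra); lra.
  - replace ((mu + mu * mu * delta / 2) * (/ mu - delta))
      with (1 - mu * delta / 2 - mu * delta * (mu * delta) / 2) by (field; lra).
    assert (0 < mu * delta) by (apply Rmult_lt_0_compat; lra); nra.
Qed.

Lemma mul_exp_le_of_log_budget (r k A s theta : R) : 0 < r -> theta < 1 ->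
  r <= k * exp (- A / (1 - theta)) -> s <= theta * ln (k / r) ->
  r * exp (A + s) <= k.
Proof.
  intros Hr Htheta Hrk Hs.
  assert (Hk : 0 < k).
  { assert (He := exp_pos (- A / (1 - theta))); nra. }
  assert (Hlog : A / (1 - theta) <= ln (k / r)).
  { rewrite ln_div by lra.
    assert (Hln := ln_le _ _ Hr Hrk).
    rewrite ln_mult, ln_exp in Hln by (try apply exp_pos; lra).
    unfold Rdiv in *; lra. }
  assert (HA : A <= (1 - theta) * ln (k / r)).
  { apply Rmult_le_compat_l with (r := 1 - theta) in Hlog; [| lra].
    unfold Rdiv in Hlog; rewrite <- Rmult_assoc, (Rmult_comm (1 - theta)),
      Rmult_assoc, Rinv_r, Rmult_1_r in Hlog by lra.
    exact Hlog. }
  apply Rle_trans with (r * exp (ln (k / r))).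
  - apply Rmult_le_compat_l, exp_le_exp; lra.
  - rewrite exp_ln by (apply Rdiv_lt_0_compat; lra); right; field; lra.
Qed.

Lemma mu_cos_limit_eventually_bounded (a : R -> R -> R) (mu B : R) :
  converges_to_mu_cos a mu -> 0 < mu < B ->
  exists T, 0 <= T /\ forall t x, T <= t -> -PI <= x <= PI -> Rabs (a t x) <= B.
Proof.
  intros Hlim HB.
  destruct (Hlim (B - mu) ltac:(lra)) as [T HT].
  exists (Rmax T 0); split; [apply Rmax_r |].
  intros t x Ht Hx.
  specialize (HT t x ltac:(assert (H := Rmax_l T 0); lra) Hx).
  assert (Hcos := COS_bound x).
  apply Rabs_le_between in HT; apply Rabs_le_between; nra.
Qed.

Lemma mu_cos_limit_two_phase_bound (a : R -> R -> R) (mu B : R) :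
  (forall t x, 0 <= t -> continuous (fun p : R * R => a (fst p) (snd p)) (t, x)) ->
  converges_to_mu_cos a mu -> 0 < mu < B ->
  exists M T, 0 <= T /\
    (forall t x, 0 <= t -> -PI <= x <= PI -> Rabs (a t x) <= M) /\
    (forall t x, T <= t -> -PI <= x <= PI -> Rabs (a t x) <= B).
Proof.
  intros Hcont Hlim HB.
  destruct (mu_cos_limit_eventually_bounded a mu B Hlim HB) as [T [HT Hlate]].
  destruct (continuity_2d_bounded_rectangle a 0 T (- PI) PI) as [M Hearly].
  { intros t x Ht Hx; apply continuity_2d_pt_filterlim, Hcont; lra. }
  exists (Rmax M B), T; split; [exact HT | split; [| exact Hlate]].
  intros t x Ht Hx; destruct (Rle_or_lt t T).
  - apply Rle_trans with M; [apply Hearly; lra | apply Rmax_l].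
  - apply Rle_trans with B; [apply Hlate; lra | apply Rmax_r].
Qed.

Theorem lemma6p1 (a : R -> R -> R) (mu : R) :
  is_global_solution a ->
  even_in_x a ->
  0 < mu ->
  converges_to_mu_cos a mu ->
  forall kappa0 delta : R, 0 < kappa0 -> 0 < delta < / mu ->
  exists kappa : R, 0 < kappa < kappa0 /\
    forall (z0 : R) (z : R -> R),
      0 < Rabs z0 <= kappa ->
      is_characteristic a z0 z ->
      forall t : R, 0 <= t <= (/ mu - delta) * ln (kappa0 / Rabs z0) ->
        Rabs (z t) <= kappa0.
Proof.
  intros [a_joint [_ a_mean]] a_even mu_pos a_lim kappa0 delta kappa0_pos delta_range.
  assert (HPI := PI_RGT_0).
  destruct (rate_above mu delta mu_pos delta_range) as [B [muB theta_lt1]].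
  destruct (mu_cos_limit_two_phase_bound a mu B) as [M [T [T_ge0 [a_bound a_late]]]];
    [intros t x Ht; apply a_joint, Ht | exact a_lim | lra |].
  set (theta := B * (/ mu - delta)) in theta_lt1.
  set (kappa1 := kappa0 * exp (- (M * T) / (1 - theta))).
  assert (kappa1_pos : 0 < kappa1) by (apply Rmult_lt_0_compat; [lra | apply exp_pos]).
  set (kappa := Rmin (Rmin kappa1 (PI / 2)) (kappa0 / 2)).
  assert (Hkappa : kappa <= Rmin kappa1 (PI / 2)) by apply Rmin_l.
  assert (Hkappa0 : kappa <= kappa0 / 2) by apply Rmin_r.
  assert (Hkappa1 := Rmin_l kappa1 (PI / 2)).
  assert (HkappaPI := Rmin_r kappa1 (PI / 2)).
  exists kappa; split; [split; [repeat apply Rmin_glb_lt | ]; lra |].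
  intros z0 z [z0_pos z0_small] [z_init z_deriv] t Ht.
  assert (Hgrowth := characteristic_two_phase_growth a z
    (fun t x Ht => continuous_section a t x (a_joint t x Ht)) a_even a_mean z_deriv
    M B T T_ge0 ltac:(lra) a_bound a_late ltac:(rewrite z_init; lra) t (proj1 Ht)).
  rewrite z_init in Hgrowth.
  apply Rle_trans with (1 := Hgrowth), (mul_exp_le_of_log_budget _ _ _ _ theta);
    [lra | lra | fold kappa1; lra |].
  unfold theta; rewrite Rmult_assoc; apply Rmult_le_compat_l; lra.
Qed.
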